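(* Let $n\ge 2$ and let $K\subset\mathbb{R}^n$ be bounded and not contained in any $1$-dimensional linear subspace. Then (i) $K\in\mathcal{C}_e^n$ if and only if $K=\mathrm{cyl}(K)$; and (ii) $K^{\diamond\diamond}=\mathrm{cyl}(K)$.
   Context: For $x,y\in\mathbb{R}^n$ let $[x,y]=\sqrt{|x|^2|y|^2-(x\cdot y)^2}$. The sine polar body of $K$ is $K^{\diamond}=\{x\in\mathbb{R}^n:[x,y]\le1\text{ for all }y\in K\}$ and $K^{\diamond\diamond}=(K^{\diamond})^{\diamond}$. A closed solid cylinder is a set $C^{-}(u,r)=\{x\in\mathbb{R}^n:[x,u]\le r\}$ with $u\in S^{n-1}$, $r>0$. $\mathcal{C}_e^n$ is the class of origin-symmetric convex bodies in $\mathbb{R}^n$ that are intersections of closed solid cylinders. For a bounded set $E$ not contained in any $1$-dimensional subspace, its cylindrical hull $\mathrm{cyl}(E)$ is the intersection of all closed solid cylinders $C^{-}(u,r)$ containing $E$. *)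

From HB Require Import structures.
From mathcomp Require Import all_boot all_order all_algebra.
From mathcomp Require Import all_classical all_reals all_analysis.
Set Implicit Arguments. Unset Strict Implicit. Unset Printing Implicit Defensive.
Import Order.TTheory GRing.Theory Num.Theory.
Import numFieldNormedType.Exports.
Local Open Scope classical_set_scope.
Local Open Scope ring_scope.

Section SinePolar.
Variables (R : realType) (n : nat).
Implicit Types (x y u : 'rV[R]_n) (K E : set 'rV[R]_n).

Definition dotv x y : R := \sum_(i < n) x ord0 i * y ord0 i.
Definition sqnorm x : R := dotv x x.

Definition sinbr x y : R := Num.sqrt (sqnorm x * sqnorm y - (dotv x y) ^+ 2).

Definition sine_polar K : set 'rV[R]_n := [set x | forall y, K y -> sinbr x y <= 1].

Definition cylinder u (r : R) : set 'rV[R]_n := [set x | sinbr x u <= r].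

Definition is_cylinder (C : set 'rV[R]_n) : Prop :=
  exists u (r : R), sqnorm u = 1 /\ 0 < r /\ C = cylinder u r.

Definition convex_set_rv K : Prop :=
  forall x y (t : R), K x -> K y -> 0 <= t <= 1 -> K (t *: x + (1 - t) *: y).

Definition convex_body K : Prop :=
  compact K /\ convex_set_rv K /\ (K° !=set0).

Definition origin_symmetric K : Prop := forall x, K x -> K (- x).

Definition cyl_intersection K : Prop :=
  exists F : set (set 'rV[R]_n), (forall C, F C -> is_cylinder C) /\
    K = \bigcap_(C in F) C.

Definition Cen K : Prop := convex_body K /\ origin_symmetric K /\ cyl_intersection K.

Definition cyl E : set 'rV[R]_n :=
  [set x | forall u (r : R), sqnorm u = 1 -> 0 < r -> E `<=` cylinder u r ->
     cylinder u r x].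

Definition bounded_eucl E : Prop := exists M : R, forall x, E x -> sqnorm x <= M.

Definition in_line E : Prop :=
  exists v, v != 0 /\ forall x, E x -> exists t : R, x = t *: v.

End SinePolar.

(** Cylinders are sublevel sets of [x |-> [x,u]^2 = |x|^2 - (x.u)^2], a positive
    semidefinite quadratic form, so they are closed, convex and symmetric, and so is
    any intersection of them, in particular [cyl K].  If [K] contains independent
    vectors [a], [b] and both lie within distance [r] of a line, their Gram
    determinant is [O(r^2)]; hence the radii of the cylinders containing [K] are
    bounded below and [cyl K] contains a ball around the origin.  For (ii),
    [K] lies in the cylinder of axis [u] and radius [r] exactly when [r^-1 u] lies
    in the sine polar of [K], and every non-zero point of the sine polar is of this
    form. *)

From mathcomp Require Import all_boot all_order all_algebra.
From mathcomp Require Import all_classical all_reals all_analysis.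
From mathcomp Require Import ring lra.
Import Order.TTheory GRing.Theory Num.Theory.
Import numFieldNormedType.Exports.
Local Open Scope classical_set_scope.
Local Open Scope ring_scope.

Section Gram.
Context {R : realType} {n : nat}.
Implicit Types (x y z u : 'rV[R]_n).

Lemma dotvC x y : dotv x y = dotv y x.
Proof. by apply: eq_bigr => i _; rewrite mulrC. Qed.

Lemma dotvDl x y z : dotv (x + y) z = dotv x z + dotv y z.
Proof. by rewrite /dotv -big_split; apply: eq_bigr => i _; rewrite mxE mulrDl. Qed.

Lemma dotvZl (a : R) x y : dotv (a *: x) y = a * dotv x y.
Proof. by rewrite /dotv mulr_sumr; apply: eq_bigr => i _; rewrite mxE mulrA. Qed.

Lemma dotvNl x y : dotv (- x) y = - dotv x y.
Proof. by rewrite -scaleN1r dotvZl mulN1r. Qed.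

Lemma dotvDr x y z : dotv x (y + z) = dotv x y + dotv x z.
Proof. by rewrite dotvC dotvDl !(dotvC x). Qed.

Lemma dotvZr (a : R) x y : dotv x (a *: y) = a * dotv x y.
Proof. by rewrite dotvC dotvZl dotvC. Qed.

Lemma dotvNr x y : dotv x (- y) = - dotv x y.
Proof. by rewrite dotvC dotvNl dotvC. Qed.

Definition dotv_bilin := (dotvDl, dotvDr, dotvNl, dotvNr, dotvZl, dotvZr).

Lemma dotv0r x : dotv x 0 = 0.
Proof. by rewrite -(scale0r (0 : 'rV[R]_n)) dotvZr mul0r. Qed.

Lemma sqnorm0 : sqnorm (0 : 'rV[R]_n) = 0.
Proof. exact: dotv0r. Qed.

Lemma sqnormZ (a : R) x : sqnorm (a *: x) = a ^+ 2 * sqnorm x.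
Proof. by rewrite /sqnorm dotvZl dotvZr mulrA expr2. Qed.

Lemma sqnorm_ge0 x : 0 <= sqnorm x.
Proof. by apply: sumr_ge0 => i _; rewrite -expr2 sqr_ge0. Qed.

Lemma coord_sqr_le_sqnorm x i : x ord0 i ^+ 2 <= sqnorm x.
Proof.
rewrite /sqnorm /dotv (bigD1 i) //= expr2 lerDl.
by apply: sumr_ge0 => j _; rewrite -expr2 sqr_ge0.
Qed.

Lemma sqnorm_gt0 x : (0 < sqnorm x) = (x != 0).
Proof.
apply/idP/idP => [|x0]; first by apply: contraTneq => ->; rewrite sqnorm0 ltxx.
rewrite lt_neqAle sqnorm_ge0 andbT eq_sym; apply: contra x0.
rewrite /sqnorm /dotv psumr_eq0 => [/allP x0|i _]; last by rewrite -expr2 sqr_ge0.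
apply/eqP/rowP => i; rewrite mxE.
by have /= := x0 i (mem_index_enum _); rewrite mulf_eq0 orbb => /eqP.
Qed.

Definition gram x y : R := sqnorm x * sqnorm y - dotv x y ^+ 2.

Lemma gramC x y : gram x y = gram y x.
Proof. by rewrite /gram dotvC mulrC. Qed.

Lemma gramNl x y : gram (- x) y = gram x y.
Proof. by rewrite /gram /sqnorm dotvNl dotvNl dotvNr opprK sqrrN. Qed.

Lemma gram_unit u x : sqnorm u = 1 -> gram x u = sqnorm x - dotv x u ^+ 2.
Proof. by move=> u1; rewrite /gram u1 mulr1. Qed.

Lemma sqnorm_gram x y :
  sqnorm (sqnorm y *: x - dotv x y *: y) = sqnorm y * gram x y.
Proof.
rewrite /gram /sqnorm !dotv_bilin (dotvC y x) -/(sqnorm x) -/(sqnorm y); ring.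
Qed.

Lemma gram_ge0 x y : 0 <= gram x y.
Proof.
have [->|y0] := eqVneq y 0.
  by rewrite /gram sqnorm0 dotv0r expr2 !mulr0 subrr.
by rewrite -(pmulr_rge0 _ (_ : 0 < sqnorm y)) ?sqnorm_gt0 // -sqnorm_gram sqnorm_ge0.
Qed.

Lemma gram_gt0 x y : x != 0 -> ~ (exists a : R, y = a *: x) -> 0 < gram y x.
Proof.
move=> x0 yNx; have sx0 : 0 < sqnorm x by rewrite sqnorm_gt0.
rewrite -(pmulr_rgt0 _ sx0) -sqnorm_gram sqnorm_gt0 //; apply: contra_notN yNx.
rewrite subr_eq0 => /eqP exy; exists (dotv y x / sqnorm x).
by rewrite mulrC -scalerA -exy scalerA mulVf ?gt_eqF // scale1r.
Qed.

Lemma gram_le_sqnorm u x : sqnorm u = 1 -> gram x u <= sqnorm x.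
Proof. by move=> u1; rewrite gram_unit // gerBl sqr_ge0. Qed.

Lemma gram_convex u x y (t : R) : 0 <= t <= 1 ->
  gram (t *: x + (1 - t) *: y) u <= t * gram x u + (1 - t) * gram y u.
Proof.
move=> /andP[t0 t1]; rewrite -subr_ge0.
have -> : t * gram x u + (1 - t) * gram y u - gram (t *: x + (1 - t) *: y) u
    = t * (1 - t) * gram (x - y) u.
  by rewrite /gram /sqnorm !dotv_bilin (dotvC y x); ring.
by rewrite !mulr_ge0 ?gram_ge0 ?subr_ge0.
Qed.

Lemma sqnormB_le x y : sqnorm (x - y) <= 2 * (sqnorm x + sqnorm y).
Proof.
have := sqnorm_ge0 (x + y); rewrite /sqnorm !dotv_bilin (dotvC y x); lra.
Qed.

Lemma gram_le_mul x y : gram x y <= sqnorm x * sqnorm y.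
Proof. by rewrite gerBl sqr_ge0. Qed.

Lemma sqnorm_orth u x : sqnorm u = 1 -> sqnorm (x - dotv x u *: u) = gram x u.
Proof.
move=> u1; rewrite gram_unit // /sqnorm !dotv_bilin -/(sqnorm u) u1 (dotvC u x); ring.
Qed.

Lemma dotv_unit_sqr_le u x : sqnorm u = 1 -> dotv x u ^+ 2 <= sqnorm x.
Proof. by move=> u1; rewrite -subr_ge0 -gram_unit ?gram_ge0. Qed.

(** Writing [a'], [b'] for the components of [a], [b] orthogonal to [u],
    [gram a b = gram a' b' + |(b.u) a' - (a.u) b'|^2]. *)
Lemma gram_le_unit a b u : sqnorm u = 1 ->
  gram a b <= gram a u * gram b u + 2 * (sqnorm b * gram a u + sqnorm a * gram b u).
Proof.
move=> u1; set a' := a - dotv a u *: u; set b' := b - dotv b u *: u.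
have -> : gram a b = gram a' b' + sqnorm (dotv b u *: a' - dotv a u *: b').
  rewrite /gram /sqnorm /a' /b' !dotv_bilin -/(sqnorm u) u1.
  by rewrite (dotvC b a) (dotvC u a) (dotvC u b); ring.
have Ea : sqnorm a' = gram a u by exact: sqnorm_orth.
have Eb : sqnorm b' = gram b u by exact: sqnorm_orth.
apply: lerD; first by rewrite -Ea -Eb gram_le_mul.
apply: le_trans (sqnormB_le _ _) _; rewrite !sqnormZ Ea Eb ler_pM2l //.
by apply: lerD; apply: ler_wpM2r; rewrite ?gram_ge0 ?dotv_unit_sqr_le.
Qed.

Lemma sinbrE x y : sinbr x y = Num.sqrt (gram x y).
Proof. by []. Qed.

Lemma sinbr_le x y (r : R) : 0 <= r -> (sinbr x y <= r) = (gram x y <= r ^+ 2).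
Proof.
by move=> r0; rewrite sinbrE -{1}(ger0_norm r0) -sqrtr_sqr ler_sqrt ?sqr_ge0.
Qed.

Lemma sinbrC x y : sinbr x y = sinbr y x.
Proof. by rewrite !sinbrE gramC. Qed.

Lemma sinbrNl x y : sinbr (- x) y = sinbr x y.
Proof. by rewrite !sinbrE gramNl. Qed.

Lemma sinbrZr x y (a : R) : sinbr x (a *: y) = `|a| * sinbr x y.
Proof.
have -> : sinbr x (a *: y) = Num.sqrt (a ^+ 2 * gram x y).
  by rewrite sinbrE /gram sqnormZ dotvZr; congr Num.sqrt; ring.
by rewrite sqrtrM ?sqr_ge0 // sqrtr_sqr.
Qed.

Lemma sinbr0r x : sinbr x 0 = 0.
Proof. by rewrite -(scale0r 0) sinbrZr normr0 mul0r. Qed.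

End Gram.

Lemma continuous_sum {T : topologicalType} {K : numFieldType} {V : normedModType K}
    (I : Type) (s : seq I) (f : I -> T -> V) :
  (forall i, continuous (f i)) -> continuous (fun x => \sum_(i <- s) f i x).
Proof.
move=> fc; elim: s => [|i s IHs] x.
  by under eq_fun do rewrite big_nil; exact: cst_continuous.
by under eq_fun do rewrite big_cons; apply: continuousD; [exact: fc | exact: IHs].
Qed.

Section Cylinders.
Context {R : realType} {n : nat}.
Implicit Types (x y u : 'rV[R]_n) (K : set 'rV[R]_n).

Lemma dotv_continuous u : continuous (fun x => dotv x u).
Proof.
apply: continuous_sum => i x.
by apply: continuousM; [exact: coord_continuous | exact: cst_continuous].
Qed.

Lemma sqnorm_continuous : continuous (@sqnorm R n).
Proof. by apply: continuous_sum => i x; apply: continuousM; exact: coord_continuous. Qed.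

Lemma gram_continuous u : continuous (fun x => gram x u).
Proof.
move=> x; suff : {for x, continuous (fun x => gram x u)} by [].
apply: continuousD; last first.
  by apply: continuousN; apply: (continuousM (dotv_continuous u x) (dotv_continuous u x)).
by apply: continuousM; [exact: sqnorm_continuous | exact: cst_continuous].
Qed.

Lemma sinbr_continuous u : continuous (fun x => sinbr x u).
Proof.
by move=> x; exact: (continuous_comp (gram_continuous u x) (@sqrt_continuous R _)).
Qed.

Lemma cylinder_closed u (r : R) : closed (cylinder u r).
Proof.
rewrite (_ : cylinder u r = (fun x => sinbr x u) @^-1` [set s | s <= r]) //.
by apply: (proj1 (continuous_closedP _) (sinbr_continuous u)); exact: closed_le.
Qed.

Lemma cylinder_convex u (r : R) : 0 <= r -> convex_set_rv (cylinder u r).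
Proof.
move=> r0 x y t; rewrite /cylinder /= !sinbr_le // => gx gy t01.
apply: le_trans (gram_convex u x y t t01) _; case/andP: t01 => t0 t1.
have -> : r ^+ 2 = t * r ^+ 2 + (1 - t) * r ^+ 2 by ring.
by apply: lerD; apply: ler_wpM2l; rewrite ?subr_ge0.
Qed.

Lemma cylinder_symmetric u (r : R) : origin_symmetric (cylinder u r).
Proof. by move=> x; rewrite /cylinder /= sinbrNl. Qed.

Lemma cylinder_radius_lb a b : 0 < gram a b ->
  exists2 m : R, 0 < m & forall u r, sqnorm u = 1 -> 0 <= r ->
    cylinder u r a -> cylinder u r b -> m <= r ^+ 2.
Proof.
move=> gab; set c := 1 + 2 * (sqnorm a + sqnorm b).
have c0 : 0 < c by rewrite /c; have := sqnorm_ge0 a; have := sqnorm_ge0 b; lra.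
(* By [gram_le_unit], [gram a b <= r^2 c] as soon as [r^2 <= 1]. *)
exists (Num.min 1 (gram a b / c)); first by rewrite lt_min ltr01 divr_gt0.
move=> u r u1 r0; rewrite /cylinder /= !sinbr_le // => ga gb.
rewrite ge_min; have [//|r1] := leP 1 (r ^+ 2); apply/orP; right.
rewrite ler_pdivrMr //; apply: le_trans (gram_le_unit a b u u1) _.
have r2 := sqr_ge0 r; have Pa := sqnorm_ge0 a; have Pb := sqnorm_ge0 b.
have : gram a u * gram b u <= r ^+ 2 * r ^+ 2 by apply: ler_pM; rewrite ?gram_ge0.
have : sqnorm b * gram a u <= sqnorm b * r ^+ 2 by apply: ler_wpM2l.
have : sqnorm a * gram b u <= sqnorm a * r ^+ 2 by apply: ler_wpM2l.
rewrite /c; move: r1 r2; set s := r ^+ 2; nra.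
Qed.

Lemma not_in_line_gram K : (0 < n)%N -> ~ in_line K ->
  exists a b, [/\ K a, K b & 0 < gram a b].
Proof.
move=> n0 Kl.
have [a [Ka a0]] : exists a, K a /\ a != 0.
  apply: contrapT => Kn0; apply: Kl; exists (const_mx 1); split.
    by apply/eqP => /rowP /(_ (Ordinal n0)) /eqP; rewrite !mxE oner_eq0.
  move=> x Kx; exists 0; rewrite scale0r; apply: contrapT => x0.
  by apply: Kn0; exists x; split => //; apply/eqP.
have [b [Kb bNa]] : exists b, K b /\ ~ exists t : R, b = t *: a.
  apply: contrapT => Kna; apply: Kl; exists a; split => // x Kx.
  by apply: contrapT => xNa; apply: Kna; exists x.
by exists b, a; split => //; exact: gram_gt0.
Qed.

Lemma sub_cyl K : K `<=` cyl K.
Proof. by move=> x Kx u r _ _; apply. Qed.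

Lemma cyl_intersection_cyl K : cyl_intersection (cyl K).
Proof.
exists [set C | exists u r,
  [/\ sqnorm u = 1, 0 < r, K `<=` cylinder u r & C = cylinder u r]].
split; first by move=> C [u [r [u1 r0 _ ->]]]; exists u, r.
apply/seteqP; split => [x Kx C [u [r [u1 r0 Ku ->]]]|x Cx u r u1 r0 Ku].
  exact: Kx.
by apply: Cx; exists u, r.
Qed.

Section CylIntersection.
Context {K : set 'rV[R]_n} (KI : cyl_intersection K).

Lemma cyl_intersection_closed : closed K.
Proof.
case: KI => F [FC ->]; apply: closed_bigI => C /FC [u [r [_ [_ ->]]]].
exact: cylinder_closed.
Qed.

Lemma cyl_intersection_convex : convex_set_rv K.
Proof.
case: KI => F [FC ->] x y t Fx Fy t01 C FCC.
have [u [r [_ [r0 EC]]]] := FC C FCC.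
move: (Fx C FCC) (Fy C FCC); rewrite EC => Cx Cy.
exact: cylinder_convex (ltW r0) _ _ _ Cx Cy t01.
Qed.

Lemma cyl_intersection_symmetric : origin_symmetric K.
Proof.
case: KI => F [FC ->] x Fx C FCC; have [u [r [_ [_ EC]]]] := FC C FCC.
by move: (Fx C FCC); rewrite EC; apply: cylinder_symmetric.
Qed.

Lemma cyl_id : cyl K = K.
Proof.
apply/seteqP; split; last exact: sub_cyl.
case: KI => F [FC KF] x Kx; rewrite KF => C FCC.
have [u [r [u1 [r0 EC]]]] := FC C FCC.
by rewrite EC; apply: Kx => // y; rewrite KF => /(_ C FCC); rewrite EC.
Qed.

End CylIntersection.

Lemma cyl_interior0 K : (0 < n)%N -> ~ in_line K -> (cyl K)° 0.
Proof.
move=> n0 Kl; have [a [b [Ka Kb gab]]] := not_in_line_gram K n0 Kl.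
have [m m0 rm] := cylinder_radius_lb a b gab.
have : \forall y \near (0 : 'rV[R]_n), sqnorm y < m.
  by apply: (cvgr_lt _ (sqnorm_continuous 0)); rewrite sqnorm0.
apply: filterS => y ym u r u1 r0 Ku; rewrite /cylinder /= sinbr_le ?(ltW r0) //.
apply: le_trans (gram_le_sqnorm u y u1) _; apply: ltW; apply: lt_le_trans ym _.
exact: rm (ltW r0) (Ku a Ka) (Ku b Kb).
Qed.

Lemma bounded_closed_compact_eucl K : bounded_eucl K -> closed K -> compact K.
Proof.
move=> [M KM] Kc.
apply: subclosed_compact Kc
  (rV_compact (fun i => @segment_compact R (- (M + 1)) (M + 1))) _.
move=> x Kx i; rewrite /= in_itv /= -ler_norml.
have xi2 : `|x ord0 i| ^+ 2 <= M.
  by rewrite real_normK ?num_real // (le_trans (coord_sqr_le_sqnorm x i) (KM x Kx)).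
by have := normr_ge0 (x ord0 i); nra.
Qed.

Lemma sinbr_invZr_le1 x u (r : R) : 0 < r ->
  (sinbr x (r^-1 *: u) <= 1) = (sinbr x u <= r).
Proof. by move=> r0; rewrite sinbrZr gtr0_norm ?invr_gt0 // ler_pdivrMl // mulr1. Qed.

Lemma unit_polar_decomposition x : x != 0 ->
  exists u (r : R), [/\ sqnorm u = 1, 0 < r & x = r^-1 *: u].
Proof.
move=> x0; have s0 : 0 < Num.sqrt (sqnorm x) by rewrite sqrtr_gt0 sqnorm_gt0.
exists ((Num.sqrt (sqnorm x))^-1 *: x), (Num.sqrt (sqnorm x))^-1.
split; rewrite ?invr_gt0 ?invrK ?scalerA ?mulfV ?gt_eqF ?scale1r //.
by rewrite sqnormZ exprVn sqr_sqrtr ?sqnorm_ge0 // mulVf ?lt0r_neq0 ?sqnorm_gt0.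
Qed.

Lemma sine_polar_sine_polar K : sine_polar (sine_polar K) = cyl K.
Proof.
apply/seteqP; split => [z Kz u r u1 r0 Ku | z Kz x Kx].
  rewrite /cylinder /= -sinbr_invZr_le1 //; apply: Kz => y Ky.
  by rewrite sinbrC sinbr_invZr_le1 //; exact: Ku.
have [->|x0] := eqVneq x 0; first by rewrite sinbr0r.
have [u [r [u1 r0 xE]]] := unit_polar_decomposition x x0.
rewrite xE sinbr_invZr_le1 //; apply: Kz => // y Ky.
by rewrite /cylinder /= -sinbr_invZr_le1 // sinbrC -xE; exact: Kx.
Qed.

End Cylinders.

Theorem proposition3p5 (R : realType) (n : nat) (K : set 'rV[R]_n) :
  (2 <= n)%N -> bounded_eucl K -> ~ in_line K ->
  (Cen K <-> K = cyl K) /\ sine_polar (sine_polar K) = cyl K.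
Proof.
move=> n2 Kb Kl; split; last exact: sine_polar_sine_polar.
split=> [[_ [_ KI]]|KE]; first by rewrite (cyl_id KI).
have KI : cyl_intersection K by rewrite KE; exact: cyl_intersection_cyl.
have n0 : (0 < n)%N by apply: leq_trans n2.
split; [split; [|split] | split] => //.
- exact: bounded_closed_compact_eucl K Kb (cyl_intersection_closed KI).
- exact: cyl_intersection_convex.
- by exists 0; rewrite KE; exact: cyl_interior0.
- exact: cyl_intersection_symmetric.
Qed.
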